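(* Let $m\ge1$, $n\ge1$, $N>2n$, let $\Sigma_0,\dots,\Sigma_n\in\mathbb R^{m\times m}$ and let $\mathbf T_n$ be the block-Toeplitz matrix whose $(i,j)$ block ($i,j=0,\dots,n$) is $\Sigma_{i-j}$ if $i\ge j$ and $\Sigma_{j-i}^\top$ if $i<j$. Assume there exists a symmetric positive definite $mN\times mN$ matrix $\bar{\boldsymbol\Sigma}_N$ with $E_n^\top\bar{\boldsymbol\Sigma}_NE_n=\mathbf T_n$ and $\mathbf U_N^\top\bar{\boldsymbol\Sigma}_N\mathbf U_N=\bar{\boldsymbol\Sigma}_N$. Then for every $(\Lambda,\Theta)\in\mathcal L_+$, $$J(\Lambda,\Theta)\ge mN+\log\det\bar{\boldsymbol\Sigma}_N,$$ where $J(\Lambda,\Theta)=\operatorname{Tr}(\Lambda\mathbf T_n)-\log\det(E_n\Lambda E_n^\top+\mathbf U_N\Theta\mathbf U_N^\top-\Theta)$.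
   Context: $\mathfrak S_k$ denotes the space of real symmetric $mk\times mk$ matrices. $E_n$ is the $mN\times m(n+1)$ matrix with $N\times(n+1)$ blocks of size $m\times m$ whose $(i,i)$ blocks ($i=1,\dots,n+1$) are $I_m$ and other blocks $0$. $\mathbf U_N$ is the $mN\times mN$ block shift matrix whose $(i,i+1)$ blocks ($i=1,\dots,N-1$) and $(N,1)$ block are $I_m$, others $0$. The linear map $A:\mathfrak S_{n+1}\times\mathfrak S_N\to\mathfrak S_N$ is $A(\Lambda,\Theta)=E_n\Lambda E_n^\top+\mathbf U_N\Theta\mathbf U_N^\top-\Theta$, and $\mathcal L_+=\{(\Lambda,\Theta)\in(\ker A)^\perp:A(\Lambda,\Theta)>0\}$, orthogonality being with respect to $\langle(\Lambda_1,\Theta_1),(\Lambda_2,\Theta_2)\rangle=\operatorname{Tr}(\Lambda_1\Lambda_2)+\operatorname{Tr}(\Theta_1\Theta_2)$. *)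

From mathcomp Require Import all_boot all_order all_algebra.
From mathcomp Require Import reals exp.
Import Order.TTheory GRing.Theory Num.Theory.
Local Open Scope ring_scope.

(* Block convention: an index k : 'I_(m * K) of an (m K)-dimensional block
   vector lies in block (k %/ m) (0-based) at position (k %% m) in that block. *)

Definition symm {R : realType} {d : nat} (A : 'M[R]_d) : Prop := A^T = A.

Definition posdef {R : realType} {d : nat} (A : 'M[R]_d) : Prop :=
  A^T = A /\ forall v : 'cV[R]_d, v != 0 -> 0 < (v^T *m A *m v) 0 0.

(* E_n : mN x m(n+1), block (i,i) = I_m for i = 0..n, other blocks 0. *)
Definition Emat {R : realType} (m N n : nat) : 'M[R]_(m * N, m * n.+1) :=
  \matrix_(k, l) ((k %/ m == l %/ m)%N && (k %% m == l %% m)%N)%:R.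

(* U_N : mN x mN block shift; block (i, i+1) for i = 0..N-2 and block (N-1, 0)
   are I_m (0-based), others 0. *)
Definition Umat {R : realType} (m N : nat) : 'M[R]_(m * N) :=
  \matrix_(k, l) ((l %/ m == (k %/ m).+1 %% N)%N && (k %% m == l %% m)%N)%:R.

(* Entry (a,b) of an m x m matrix, indexed by naturals (0 out of range;
   only used with a, b < m). *)
Definition ent {R : realType} {m : nat} (A : 'M[R]_m) (a b : nat) : R :=
  match (insub a : option 'I_m), (insub b : option 'I_m) with
  | Some i, Some j => A i j
  | _, _ => 0
  end.

Definition Tmat {R : realType} (m n : nat) (Sigma : nat -> 'M[R]_m)
  : 'M[R]_(m * n.+1) :=
  \matrix_(k, l)
    (if (l %/ m <= k %/ m)%N
     then ent (Sigma (k %/ m - l %/ m)%N) (k %% m)%N (l %% m)%N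
     else ent (Sigma (l %/ m - k %/ m)%N)^T (k %% m)%N (l %% m)%N).

Definition Aop {R : realType} (m N n : nat)
  (Lam : 'M[R]_(m * n.+1)) (Th : 'M[R]_(m * N)) : 'M[R]_(m * N) :=
  Emat m N n *m Lam *m (Emat m N n)^T + Umat m N *m Th *m (Umat m N)^T - Th.

Definition in_kerA_perp {R : realType} (m N n : nat)
  (Lam : 'M[R]_(m * n.+1)) (Th : 'M[R]_(m * N)) : Prop :=
  symm Lam /\ symm Th /\
  forall (Lam' : 'M[R]_(m * n.+1)) (Th' : 'M[R]_(m * N)),
    symm Lam' -> symm Th' -> Aop m N n Lam' Th' = 0 ->
    \tr (Lam *m Lam') + \tr (Th *m Th') = 0.

Definition Lplus {R : realType} (m N n : nat)
  (Lam : 'M[R]_(m * n.+1)) (Th : 'M[R]_(m * N)) : Prop :=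
  in_kerA_perp m N n Lam Th /\ posdef (Aop m N n Lam Th).

Definition Jfun {R : realType} (m N n : nat) (Sigma : nat -> 'M[R]_m)
  (Lam : 'M[R]_(m * n.+1)) (Th : 'M[R]_(m * N)) : R :=
  \tr (Lam *m Tmat m n Sigma) - ln (\det (Aop m N n Lam Th)).

From mathcomp Require Import all_boot all_order all_algebra.
From mathcomp Require Import reals exp.
From mathcomp.algebra_tactics Require Import lra.
Import Order.TTheory GRing.Theory Num.Theory.
Local Open Scope ring_scope.

(* For symmetric positive definite A and S one has
   d + ln det A + ln det S <= tr (A S), the matrix form of 1 + ln x <= x.
   It is proved by induction on d: a congruence by a unit upper triangular
   matrix L makes S block diagonal with a 1x1 Schur complement s in the
   corner.  Writing b for the corner of L^T A L, the corner contributes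
   1 + ln (b s) <= b s, the remaining blocks are handled by the induction
   hypothesis, and Fischer's inequality det A <= b det A' splits the
   determinant of A accordingly.
   The theorem follows by taking A := A(Lambda, Theta), S := SigmaBar: the two
   constraints on SigmaBar give Tr(Lambda T_n) = Tr(A(Lambda, Theta) SigmaBar),
   the Theta-terms cancelling by U_N-invariance. *)

Lemma mxtrace_conj_sub_mul (R : comPzRingType) (p q : nat)
    (E : 'M[R]_(p, q)) (U : 'M[R]_p) (L : 'M[R]_q) (T S : 'M[R]_p) :
  \tr ((E *m L *m E^T + U *m T *m U^T - T) *m S)
  = \tr (L *m (E^T *m S *m E)) + \tr (T *m (U^T *m S *m U)) - \tr (T *m S).
Proof.
rewrite !mulmxDl mulNmx !mxtraceD raddfN /=.
by rewrite -!mulmxA mxtrace_mulC [in X in _ + X - _]mxtrace_mulC !mulmxA.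
Qed.

Section PositiveDefinite.
Context {R : realType}.

Lemma posdef_mx11_gt0 {a : 'M[R]_1} : posdef a -> 0 < a 0 0.
Proof.
move=> [_ Ha]; have := Ha 1 (oner_neq0 _).
by rewrite trmx1 mul1mx mulmx1.
Qed.

Lemma posdef_unitmx {d} {S : 'M[R]_d} : posdef S -> S \in unitmx.
Proof.
move=> [_ HS]; rewrite unitmxE unitfE; apply/det0P => -[v v0 vS].
have := HS v^T; rewrite trmxK vS mul0mx mxE ltxx => /implyP.
by rewrite trmx_eq0 v0.
Qed.

Lemma posdef_congr {d} (S P : 'M[R]_d) :
  posdef S -> P \in unitmx -> posdef (P^T *m S *m P).
Proof.
move=> [HS Hp] HP; split; first by rewrite !trmx_mul trmxK HS mulmxA.
move=> v v0; have Pv0 : P *m v != 0.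
  by apply: contraNneq v0 => Pv; rewrite -(mulKmx HP v) Pv mulmx0.
by have := Hp _ Pv0; rewrite trmx_mul !mulmxA.
Qed.

Lemma posdef_ulsub {k1 k2} {M : 'M[R]_(k1 + k2)} :
  posdef M -> posdef (ulsubmx M).
Proof.
move=> [HS Hp]; split; first by rewrite trmx_ulsub HS.
move=> w w0; have c0 : col_mx w (0 : 'cV_k2) != 0.
  by apply: contraNneq w0 => /eqP; rewrite col_mx_eq0 => /andP[].
have := Hp _ c0; rewrite -{1}(submxK M) tr_col_mx mul_row_block trmx0.
by rewrite !mul0mx !addr0 mul_row_col mulmx0 addr0.
Qed.

Lemma posdef_drsub {k1 k2} {M : 'M[R]_(k1 + k2)} :
  posdef M -> posdef (drsubmx M).
Proof.
move=> [HS Hp]; split; first by rewrite trmx_drsub HS.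
move=> w w0; have c0 : col_mx (0 : 'cV_k1) w != 0.
  by apply: contraNneq w0 => /eqP; rewrite col_mx_eq0 => /andP[].
have := Hp _ c0; rewrite -{1}(submxK M) tr_col_mx mul_row_block trmx0.
by rewrite !mul0mx !add0r mul_row_col mulmx0 add0r.
Qed.

Definition shear_mx {k} (v : 'rV[R]_k) : 'M[R]_(1 + k) := block_mx 1%:M v 0 1%:M.

Lemma det_shear_mx {k} (v : 'rV[R]_k) : \det (shear_mx v) = 1.
Proof. by rewrite det_ublock !det1 mulr1. Qed.

Lemma shear_mx_unit {k} (v : 'rV[R]_k) : shear_mx v \in unitmx.
Proof. by rewrite unitmxE det_shear_mx unitr1. Qed.

Lemma det_shear_congr {k} (v : 'rV[R]_k) (S : 'M[R]_(1 + k)) :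
  \det (shear_mx v *m S *m (shear_mx v)^T) = \det S.
Proof. by rewrite !det_mulmx det_tr det_shear_mx mul1r mulr1. Qed.

(* [s] is the Schur complement of the lower right block. *)
Lemma posdef_schur_decomp {k} {S : 'M[R]_(1 + k)} : posdef S ->
  exists (v : 'rV[R]_k) (s : 'M[R]_1),
    [/\ S = shear_mx v *m block_mx s 0 0 (drsubmx S) *m (shear_mx v)^T,
        0 < s 0 0 & s 0 0 <= ulsubmx S 0 0].
Proof.
move=> HSp; have [HS _] := HSp.
set S2 := drsubmx S; have S2_unit : S2 \in unitmx.
  exact/posdef_unitmx/posdef_drsub.
have := HS; rewrite -{1}(submxK S) tr_block_mx => /esym/(etrans (submxK S)).
move=> /eq_block_mx[_ _ Hdl Hdr].
set v := ursubmx S *m invmx S2; set s := ulsubmx S - v *m S2 *m v^T.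
have S2v : S2 *m v^T = dlsubmx S.
  by rewrite /v trmx_mul trmx_inv -Hdr mulmxA mulmxV // mul1mx -Hdl.
have decS : S = shear_mx v *m block_mx s 0 0 S2 *m (shear_mx v)^T.
  rewrite /shear_mx tr_block_mx !trmx1 trmx0 !mulmx_block.
  rewrite !(mul1mx, mul0mx, mulmx0, addr0, add0r, mulmx1).
  by rewrite /s subrK mulmxKV // S2v submxK.
have unshear : shear_mx (- v) *m shear_mx v = 1%:M.
  rewrite /shear_mx mulmx_block !(mul1mx, mul0mx, mulmx0, addr0, add0r, mulmx1).
  by rewrite subrr -scalar_mx_block.
have Hblock : posdef (block_mx s 0 0 S2).
  have -> : block_mx s 0 0 S2 = shear_mx (- v) *m S *m (shear_mx (- v))^T.
    by rewrite decS !mulmxA unshear mul1mx -!mulmxA -trmx_mul unshear trmx1 mulmx1.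
  rewrite -{1}[shear_mx (- v)]trmxK.
  by apply: posdef_congr => //; rewrite unitmx_tr shear_mx_unit.
exists v, s; split => //.
  by have := posdef_mx11_gt0 (posdef_ulsub Hblock); rewrite block_mxKul.
rewrite /s !mxE gerDl oppr_le0.
have [/eqP ->|nz] := boolP (v^T == 0).
  by rewrite big1 // => j _; rewrite !mxE mulr0.
by have := (posdef_drsub HSp).2 _ nz; rewrite trmxK mxE => /ltW.
Qed.

Lemma posdef_det_gt0 {d} {S : 'M[R]_d} : posdef S -> 0 < \det S.
Proof.
elim: d S => [S _|k IH S HS]; first by rewrite det_mx00.
have {}HS : posdef (S : 'M_(1 + k)) := HS.
have [v [s [-> s_gt0 _]]] := posdef_schur_decomp HS.
rewrite det_shear_congr det_ublock det_mx11.
by rewrite mulr_gt0 //; apply/IH/posdef_drsub.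
Qed.

Lemma posdef_det_le_fischer {k} {B : 'M[R]_(1 + k)} :
  posdef B -> \det B <= ulsubmx B 0 0 * \det (drsubmx B).
Proof.
move=> HB; have [v [s [decB _ s_le]]] := posdef_schur_decomp HB.
rewrite {1}decB det_shear_congr det_ublock det_mx11.
by rewrite ler_wpM2r // ltW //; apply/posdef_det_gt0/posdef_drsub.
Qed.

Lemma add1_ln_le {x : R} : 0 < x -> 1 + ln x <= x.
Proof. by move=> x_gt0; rewrite -{2}(lnK x_gt0) expR_ge1Dx. Qed.

Lemma ln_det_le_mxtrace_succ k :
  (forall A S : 'M[R]_k, posdef A -> posdef S ->
     k%:R + ln (\det A) + ln (\det S) <= \tr (A *m S)) ->
  forall A S : 'M[R]_(1 + k), posdef A -> posdef S ->
    (1 + k)%:R + ln (\det A) + ln (\det S) <= \tr (A *m S).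
Proof.
move=> IH A S HA HS; have [v [s [decS s_gt0 _]]] := posdef_schur_decomp HS.
set B := (shear_mx v)^T *m A *m shear_mx v.
have HB : posdef B by apply: posdef_congr; rewrite ?shear_mx_unit.
have detB : \det B = \det A by rewrite /B !det_mulmx det_tr det_shear_mx mul1r mulr1.
have trAS : \tr (A *m S) = ulsubmx B 0 0 * s 0 0 + \tr (drsubmx B *m drsubmx S).
  rewrite {1}decS !mulmxA mxtrace_mulC !mulmxA -/B.
  rewrite -{1}(submxK B) mulmx_block mxtrace_block !mulmx0 !addr0 add0r.
  by rewrite /mxtrace big_ord1 mxE big_ord1.
have HB2 := posdef_drsub HB; have HS2 := posdef_drsub HS.
have b_gt0 : 0 < ulsubmx B 0 0 := posdef_mx11_gt0 (posdef_ulsub HB).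
have [dB2 dS2] := (posdef_det_gt0 HB2, posdef_det_gt0 HS2).
have lnA : ln (\det A) <= ln (ulsubmx B 0 0) + ln (\det (drsubmx B)).
  rewrite -detB -lnM ?posrE // ler_ln ?posrE ?mulr_gt0 ?(posdef_det_gt0 HB) //.
  exact: posdef_det_le_fischer.
have lnS : ln (\det S) = ln (s 0 0) + ln (\det (drsubmx S)).
  by rewrite {1}decS det_shear_congr det_ublock det_mx11 lnM ?posrE.
have corner := add1_ln_le (mulr_gt0 b_gt0 s_gt0).
rewrite lnM ?posrE // in corner.
have blocks := IH _ _ HB2 HS2; rewrite trAS lnS natrD; lra.
Qed.

Lemma ln_det_le_mxtrace {d} {A S : 'M[R]_d} : posdef A -> posdef S ->
  d%:R + ln (\det A) + ln (\det S) <= \tr (A *m S).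
Proof.
elim: d A S => [A S _ _|k IH]; last exact: ln_det_le_mxtrace_succ.
by rewrite !det_mx00 ln1 /mxtrace big_ord0 !addr0.
Qed.

End PositiveDefinite.

Theorem lemma3 (R : realType) (m n N : nat) (Sigma : nat -> 'M[R]_m)
  (SigmaBar : 'M[R]_(m * N)) :
  (1 <= m)%N -> (1 <= n)%N -> (2 * n < N)%N ->
  posdef SigmaBar ->
  (Emat m N n)^T *m SigmaBar *m Emat m N n = Tmat m n Sigma ->
  (Umat m N)^T *m SigmaBar *m Umat m N = SigmaBar ->
  forall (Lam : 'M[R]_(m * n.+1)) (Th : 'M[R]_(m * N)),
    Lplus m N n Lam Th ->
    (m * N)%:R + ln (\det SigmaBar) <= Jfun m N n Sigma Lam Th.
Proof.
move=> _ _ _ HS HE HU Lam Th [_ HA].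
have trJ : \tr (Lam *m Tmat m n Sigma) = \tr (Aop m N n Lam Th *m SigmaBar).
  by rewrite mxtrace_conj_sub_mul HE HU addrK.
have trace_bound := ln_det_le_mxtrace HA HS; rewrite /Jfun trJ; lra.
Qed.
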